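(* Fix $\epsilon\in[0,1/3)$ and $\zeta\in(0,1)$, and suppose the local identification assumption holds. Let $\hat\theta\in\Theta$ be the estimator returned by the numerical optimizer. Suppose there is an event $E$ of probability at least $1-\zeta$ on which: (i) for every $k\in[L]$ and every $\theta\in\mathcal B_0$, $$\Big\|\sum_{n=1}^N\hat w^{(k)}_n(\theta)\check g^{(k)}_n(\theta)-\mu^{(k)}_g(\theta)\Big\|_2\le\delta_{\mu,k}(\zeta)+\alpha_\epsilon\sqrt{C_k},\qquad\alpha_\epsilon=\sqrt{\tfrac{\epsilon}{1-2\epsilon}}$$ (as guaranteed, under high-probability inlier stability, by the SGR reweighting with $C_k=C_{stop,k}$ or $C_k=\sup_{\theta\in\mathcal B_0}\|\Sigma^{(k)}_g(\theta)\|_{op}+\delta_{\Sigma,k}(\zeta)+(\delta_{\mu,k}(\zeta)+R_k)^2+\delta_{T,k}$); and (ii) $\hat\theta\in\mathcal B_0$ and $\|\hat\Psi^{SGR}(\hat\theta)\|_2\le\delta_{opt}$. Then on $E$ (hence with probability at least $1-\zeta$), $$\|\hat\theta-\theta^\star\|_2\le\frac{2}{\lambda^\star}\Big(\sum_{k=1}^La_k\big(\delta_{\mu,k}(\zeta)+\alpha_\epsilon\sqrt{C_k}\big)+\delta_{opt}\Big).$$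
   Context: Let $\Theta\subseteq\mathbb R^p$, $\theta^\star\in\Theta$, $L\ge1$, population moment blocks $m_k:\Theta\to\mathbb R^{q_k}$, $m=(m_1,\dots,m_L):\Theta\to\mathbb R^q$, Jacobian $G(\theta)=\nabla_\theta m(\theta)\in\mathbb R^{q\times p}$, $W\in\mathbb R^{q\times q}$ symmetric PSD, and population GMM score $\Psi(\theta)=G(\theta)^\top Wm(\theta)$. Local identification assumption: there is $r_0>0$ with $\mathcal B_0=\{\theta:\|\theta-\theta^\star\|_2\le r_0\}\subseteq\Theta$ and (i) $m(\theta^\star)=0$; (ii) $m$ is $C^1$ on $\mathcal B_0$ with $\|G(\theta)-G(\theta')\|_{op}\le L_G\|\theta-\theta'\|_2$ on $\mathcal B_0$; (iii) $\lambda^\star=\lambda_{\min}((G^\star)^\top WG^\star)>0$ where $G^\star=G(\theta^\star)$; (iv) $\|W\|_{op}L_Gr_0(\frac32\|G^\star\|_{op}+\frac12L_Gr_0)\le\lambda^\star/2$. For each $k\in[L]$, $n\in[N]$ and $\theta$, $\check g^{(k)}_n(\theta)\in\mathbb R^p$ is the per-observation gradient of the order-$k$ moment-matching objective evaluated at the (possibly $\epsilon$-contaminated) $n$-th observation, with inlier population mean $\mu^{(k)}_g(\theta)\in\mathbb R^p$; $a_1,\dots,a_L\ge0$ are scalars with $\Psi(\theta)=\sum_{k=1}^La_k\mu^{(k)}_g(\theta)$ for $\theta\in\mathcal B_0$. The capped simplex is $\Delta_{N,\epsilon}=\{w\in\mathbb R^N:\sum_nw_n=1,0\le w_n\le\frac1{(1-\epsilon)N}\}$;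 $\hat w^{(k)}(\theta)\in\Delta_{N,\epsilon}$ are the reweighting weights computed on the cloud $\{\check g^{(k)}_n(\theta)\}_n$, and $\hat\Psi^{SGR}(\theta)=\sum_{k=1}^La_k\sum_{n=1}^N\hat w^{(k)}_n(\theta)\check g^{(k)}_n(\theta)$. The constants $\delta_{\mu,k}(\zeta),C_k,\delta_{opt}\ge0$ are given. *)

From HB Require Import structures.
From mathcomp Require Import all_boot all_order all_algebra.
From mathcomp Require Import all_classical all_reals all_analysis.
Set Implicit Arguments. Unset Strict Implicit. Unset Printing Implicit Defensive.
Import Order.TTheory GRing.Theory Num.Theory.
Import numFieldNormedType.Exports.
Local Open Scope classical_set_scope.
Local Open Scope ring_scope.

Section Defs.
Variable R : realType.

Definition norm2 (n : nat) (v : 'cV[R]_n) : R :=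
  Num.sqrt (\sum_(i < n) v i 0 ^+ 2).

Definition opnorm (m n : nat) (A : 'M[R]_(m, n)) : R :=
  sup [set norm2 (A *m x) | x in [set x : 'cV[R]_n | norm2 x <= 1]].

Definition lambda_min (n : nat) (M : 'M[R]_n) : R :=
  inf [set a : R | eigenvalue M a].

Definition ball2 (n : nat) (c : 'cV[R]_n) (r : R) : set 'cV[R]_n :=
  [set x | norm2 (x - c) <= r].

Definition capped_simplex (N : nat) (eps : R) (w : 'I_N -> R) : Prop :=
  \sum_(n < N) w n = 1 /\
  (forall n, 0 <= w n /\ w n <= (((1 - eps) * N%:R)^-1)).

Definition sym_psd (n : nat) (W : 'M[R]_n) : Prop :=
  W^T = W /\ (forall x : 'cV[R]_n, 0 <= (x^T *m W *m x) 0 0).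

End Defs.

From HB Require Import structures.
From mathcomp Require Import all_boot all_order all_algebra.
From mathcomp Require Import all_classical all_reals all_analysis.
From mathcomp Require Import ring lra.
Import Order.TTheory GRing.Theory Num.Theory.
Import numFieldNormedType.Exports.
Local Open Scope classical_set_scope.
Local Open Scope ring_scope.
Set Implicit Arguments. Unset Strict Implicit. Unset Printing Implicit Defensive.

(* Write D = theta - theta_star.  Local identification makes the population score
   strongly monotone on the ball: in <D, Psi(theta)> the leading term
   D' G*' W G* D is at least lambda* |D|^2 (Rayleigh quotient), while the Lipschitz
   Jacobian bounds the Taylor remainder of m by L_G |D|^2 / 2, so the remaining terms
   cost at most |W| L_G r0 (3/2 |G*| + 1/2 L_G r0) |D|^2 <= lambda* |D|^2 / 2.
   On E, each reweighted gradient is within delta_mu,k + alpha_eps sqrt C_k of its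
   inlier mean, so |Psi(theta_hat)| <= S := sum_k a_k (delta_mu,k + alpha_eps sqrt C_k)
   + delta_opt, and Cauchy-Schwarz gives lambda* |D|^2 / 2 <= |D| S. *)

Section Euclid.
Variables (R : realType) (n : nat).
Implicit Types (x y z : 'cV[R]_n) (a : R).

Definition vdot x y : R := \sum_(i < n) x i 0 * y i 0.

Lemma vdotC x y : vdot x y = vdot y x.
Proof. by apply: eq_bigr => i _; rewrite mulrC. Qed.

Lemma vdotDl x y z : vdot (x + y) z = vdot x z + vdot y z.
Proof. by rewrite /vdot -big_split; apply: eq_bigr => i _; rewrite mxE mulrDl. Qed.

Lemma vdotBl x y z : vdot (x - y) z = vdot x z - vdot y z.
Proof. by rewrite /vdot -sumrB; apply: eq_bigr => i _; rewrite !mxE mulrBl. Qed.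

Lemma vdotZl a x y : vdot (a *: x) y = a * vdot x y.
Proof. by rewrite /vdot mulr_sumr; apply: eq_bigr => i _; rewrite mxE mulrA. Qed.

Lemma vdotDr x y z : vdot x (y + z) = vdot x y + vdot x z.
Proof. by rewrite vdotC vdotDl !(vdotC x). Qed.

Lemma vdotBr x y z : vdot x (y - z) = vdot x y - vdot x z.
Proof. by rewrite vdotC vdotBl !(vdotC x). Qed.

Lemma vdotZr a x y : vdot x (a *: y) = a * vdot x y.
Proof. by rewrite vdotC vdotZl vdotC. Qed.

Lemma vdot0l y : vdot 0 y = 0.
Proof. by rewrite /vdot big1 // => i _; rewrite mxE mul0r. Qed.

Lemma vdot0r x : vdot x 0 = 0.
Proof. by rewrite vdotC vdot0l. Qed.

Lemma vdot_ge0 x : 0 <= vdot x x.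
Proof. by rewrite /vdot sumr_ge0 // => i _; rewrite -expr2 sqr_ge0. Qed.

Lemma vdot_eq0 x : vdot x x = 0 -> x = 0.
Proof.
move=> /eqP; rewrite psumr_eq0 => [/allP x0|i _]; last by rewrite -expr2 sqr_ge0.
apply/matrixP => i j; rewrite (ord1 j) mxE.
by apply/eqP; rewrite -sqrf_eq0 expr2; apply: x0; exact: mem_index_enum.
Qed.

Lemma vdot_gt0 x : x != 0 -> 0 < vdot x x.
Proof.
by move=> x0; rewrite lt_def vdot_ge0 andbT; apply: contra_neq x0; exact: vdot_eq0.
Qed.

Lemma norm2E x : norm2 x = Num.sqrt (vdot x x).
Proof. by rewrite /norm2 /vdot; congr Num.sqrt; apply: eq_bigr => i _; rewrite expr2. Qed.

Lemma norm2_ge0 x : 0 <= norm2 x.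
Proof. by rewrite norm2E sqrtr_ge0. Qed.

Lemma norm2_sqr x : norm2 x ^+ 2 = vdot x x.
Proof. by rewrite norm2E sqr_sqrtr // vdot_ge0. Qed.

Lemma norm2_0 : norm2 (0 : 'cV[R]_n) = 0.
Proof. by rewrite norm2E vdot0l sqrtr0. Qed.

Lemma norm2_gt0 x : x != 0 -> 0 < norm2 x.
Proof. by move=> x0; rewrite norm2E sqrtr_gt0 vdot_gt0. Qed.

(* The discriminant argument: [0 <= vdot (x - t y) (x - t y)] at [t = vdot x y / vdot y y]. *)
Lemma vdot_sqr_le x y : vdot x y ^+ 2 <= vdot x x * vdot y y.
Proof.
have [->|y0] := eqVneq y 0; first by rewrite vdot0r vdot0l expr0n mulr0.
have ypos := vdot_gt0 y0.
have := vdot_ge0 (x - (vdot x y / vdot y y) *: y).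
rewrite !(vdotBl, vdotBr, vdotZl, vdotZr) (vdotC y x).
have -> : vdot x x - vdot x y / vdot y y * vdot x y
    - vdot x y / vdot y y * (vdot x y - vdot x y / vdot y y * vdot y y)
    = vdot x x - vdot x y ^+ 2 / vdot y y by field; rewrite gt_eqF.
by rewrite subr_ge0 ler_pdivrMr.
Qed.

Lemma ler_norm_vdot x y : `|vdot x y| <= norm2 x * norm2 y.
Proof.
rewrite !norm2E -sqrtrM ?vdot_ge0 // -sqrtr_sqr ler_sqrt ?vdot_sqr_le //.
by rewrite mulr_ge0 ?vdot_ge0.
Qed.

Lemma vdot_le x y : vdot x y <= norm2 x * norm2 y.
Proof. exact/ler_normlW/ler_norm_vdot. Qed.

Lemma vdot_ge x y : - (norm2 x * norm2 y) <= vdot x y.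
Proof. exact/lerNnormlW/ler_norm_vdot. Qed.

Lemma norm2D x y : norm2 (x + y) <= norm2 x + norm2 y.
Proof.
rewrite -(ler_pXn2r (n := 2)) // ?nnegrE ?addr_ge0 ?norm2_ge0 //.
rewrite norm2_sqr !(vdotDl, vdotDr) sqrrD !norm2_sqr (vdotC y x).
by have := vdot_le x y; lra.
Qed.

Lemma norm2Z a x : norm2 (a *: x) = `|a| * norm2 x.
Proof.
by rewrite !norm2E vdotZl vdotZr mulrA sqrtrM -?expr2 ?sqr_ge0 // sqrtr_sqr.
Qed.

Lemma norm2B x y : norm2 (x - y) <= norm2 x + norm2 y.
Proof. by rewrite -scaleN1r (le_trans (norm2D _ _)) // norm2Z normrN1 mul1r. Qed.

Lemma norm2_sum I (r : seq I) (P : pred I) (F : I -> 'cV[R]_n) :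
  norm2 (\sum_(i <- r | P i) F i) <= \sum_(i <- r | P i) norm2 (F i).
Proof.
elim/big_rec2: _ => [|i s t _ IH]; first by rewrite norm2_0.
exact: le_trans (norm2D _ _) (lerD (lexx _) IH).
Qed.

End Euclid.

Section OperatorNorm.
Variables (R : realType) (m n : nat).
Implicit Types (A : 'M[R]_(m, n)) (x : 'cV[R]_n) (y : 'cV[R]_m).

Lemma vdot_mulmx A x y : vdot y (A *m x) = vdot (A^T *m y) x.
Proof.
rewrite /vdot; under eq_bigr do rewrite mxE mulr_sumr.
rewrite exchange_big /=; apply: eq_bigr => j _; rewrite mxE mulr_suml.
by apply: eq_bigr => i _; rewrite mxE mulrCA mulrA.
Qed.

Lemma vdot_trmx_mulmx A x y : vdot x (A^T *m y) = vdot (A *m x) y.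
Proof. by rewrite vdotC -vdot_mulmx vdotC. Qed.

Lemma norm2_mulmx_le_frobenius A x :
  norm2 (A *m x) <= Num.sqrt (\sum_(i < m) \sum_(j < n) A i j ^+ 2) * norm2 x.
Proof.
have frob_ge0 : 0 <= \sum_(i < m) \sum_(j < n) A i j ^+ 2.
  by rewrite sumr_ge0 // => i _; rewrite sumr_ge0 // => j _; rewrite sqr_ge0.
rewrite !norm2E -sqrtrM // ler_sqrt ?mulr_ge0 ?vdot_ge0 //.
rewrite /vdot mulr_suml; apply: ler_sum => i _.
pose Ai : 'cV[R]_n := \col_j A i j.
have -> : (A *m x) i 0 = vdot Ai x by rewrite mxE; apply: eq_bigr => j _; rewrite mxE.
rewrite -expr2 (le_trans (vdot_sqr_le Ai x)) // ler_wpM2r ?vdot_ge0 //.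
by apply: ler_sum => j _; rewrite mxE expr2.
Qed.

Lemma opnorm_has_sup A :
  has_sup [set norm2 (A *m x) | x in [set x | norm2 x <= 1]].
Proof.
split; first by exists (norm2 (A *m 0)), 0 => //=; rewrite norm2_0.
exists (Num.sqrt (\sum_(i < m) \sum_(j < n) A i j ^+ 2)) => _ [x /= x1 <-].
by rewrite (le_trans (norm2_mulmx_le_frobenius A x)) // ler_piMr ?sqrtr_ge0.
Qed.

Lemma opnorm_ge0 A : 0 <= opnorm A.
Proof.
apply: le_trans (sup_upper_bound (opnorm_has_sup A) _); first exact: lexx.
by exists 0; rewrite /= ?norm2_0 // mulmx0 norm2_0.
Qed.

(* [x / norm2 x] lies in the unit ball. *)
Lemma norm2_mulmx_le A x : norm2 (A *m x) <= opnorm A * norm2 x.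
Proof.
have [->|x0] := eqVneq x 0; first by rewrite mulmx0 !norm2_0 mulr0.
have xpos := norm2_gt0 x0.
rewrite -ler_pdivrMr //.
have -> : norm2 (A *m x) / norm2 x = norm2 (A *m ((norm2 x)^-1 *: x)).
  by rewrite -scalemxAr norm2Z ger0_norm ?invr_ge0 ?norm2_ge0 // mulrC.
apply: sup_upper_bound; first exact: opnorm_has_sup.
exists ((norm2 x)^-1 *: x) => //=.
by rewrite norm2Z ger0_norm ?invr_ge0 ?norm2_ge0 // mulVf // gt_eqF.
Qed.

End OperatorNorm.

Section Rayleigh.
Variables (R : realType) (n : nat).
Implicit Types (M A : 'M[R]_n) (x y : 'cV[R]_n).

(* Compactness is available for row vectors, so the minimisation runs over ['rV_n]. *)
Lemma exists_unit_quadratic_min M : (0 < n)%N ->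
  exists2 x0, vdot x0 x0 = 1 &
    forall x, vdot x x = 1 -> vdot x0 (M *m x0) <= vdot x (M *m x).
Proof.
move=> n_gt0.
pose sq (v : 'rV[R]_n) := \sum_(i < n) v ord0 i * v ord0 i.
pose quad (v : 'rV[R]_n) := \sum_(i < n) v ord0 i * \sum_(j < n) M i j * v ord0 j.
have sqE v : vdot v^T v^T = sq v by apply: eq_bigr => i _; rewrite !mxE.
have quadE v : vdot v^T (M *m v^T) = quad v.
  by apply: eq_bigr => i _; rewrite !mxE; congr (_ * _); apply: eq_bigr => j _; rewrite !mxE.
have sum_continuous (F : 'I_n -> 'rV[R]_n -> R) :
    (forall i, continuous (F i)) -> continuous (fun v => \sum_(i < n) F i v).
  by move=> Fc; apply: (@continuous_big _ _ +%R 0 xpredT add_continuous) => i _.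
have coordc i : continuous (fun v : 'rV[R]_n => v ord0 i) by exact: coord_continuous.
have sq_cont : continuous sq.
  by apply: (sum_continuous) => i v; apply: continuousM; exact: coordc.
have quad_cont : continuous quad.
  apply: (sum_continuous) => i v; apply: continuousM; first exact: coordc.
  by apply: (sum_continuous) => j w; apply: continuousM; [exact: cst_continuous|exact: coordc].
pose S := [set v | sq v = 1].
have S_closed : closed S.
  by apply: (@preimage_closed _ _ sq [set 1]) => [v _|]; [exact: sq_cont|exact: closed_eq].
have S_compact : compact S.
  apply: (subclosed_compact S_closed
    (@rV_compact _ n (fun=> `[(-1 : R), 1]%classic) (fun=> @segment_compact R _ _))).
  move=> v /= Sv i; rewrite /= in_itv /= -ler_norml.
  rewrite -(@ler_pXn2r _ 2%N) // ?nnegrE // expr1n real_normK ?num_real //.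
  rewrite -Sv /sq (bigD1 i) //= -expr2 lerDl sumr_ge0 // => j _.
  by rewrite -expr2 sqr_ge0.
have S_nonempty : S !=set0.
  exists (\row_j (j == Ordinal n_gt0)%:R).
  rewrite /S /sq /= (bigD1 (Ordinal n_gt0)) //= !mxE eqxx mulr1 big1 ?addr0 //.
  by move=> j /negbTE j0; rewrite !mxE j0 mulr0.
have [c cS cmin] := compact_EVT_min S_nonempty S_compact (continuous_subspaceT quad_cont).
exists c^T; first by rewrite sqE; move: cS; rewrite inE.
move=> x x1; rewrite -[x]trmxK !quadE; apply: cmin.
by rewrite inE /S /= -sqE trmxK.
Qed.

Lemma exists_rayleigh_minimizer M : (0 < n)%N ->
  exists2 x0, vdot x0 x0 = 1 &
    forall y, vdot x0 (M *m x0) * vdot y y <= vdot y (M *m y).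
Proof.
move=> n_gt0; have [x0 x01 x0min] := exists_unit_quadratic_min M n_gt0.
exists x0 => // y; have [->|y0] := eqVneq y 0; first by rewrite mulmx0 !vdot0l mulr0.
have ypos := vdot_gt0 y0.
set s := Num.sqrt (vdot y y).
have s2 : s * s = vdot y y by rewrite -expr2 sqr_sqrtr // vdot_ge0.
have := x0min (s^-1 *: y).
rewrite -scalemxAr !(vdotZl, vdotZr) !mulrA -invfM s2 mulVf ?gt_eqF // => /(_ erefl).
by rewrite -(ler_pM2r ypos) mulrAC mulVf ?gt_eqF // mul1r.
Qed.

(* At [x + t A x] the form equals [2 t b + t^2 a] with [b = |A x|^2]; the choice
   [t = - b / (a + 1)] makes it [- t^2 (a + 2)], so [t = 0] and hence [b = 0]. *)
Lemma psd_quadratic_eq0 A x : A^T = A -> (forall y, 0 <= vdot y (A *m y)) ->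
  vdot x (A *m x) = 0 -> A *m x = 0.
Proof.
move=> sA psdA x0; set z := A *m x.
set a := vdot z (A *m z); set b := vdot z z.
have a0 : 0 <= a := psdA z.
pose t := - b / (a + 1).
have tb : t * (a + 1) = - b by rewrite /t mulfVK // gt_eqF // ltr_wpDl.
have := psdA (x + t *: z).
have -> : vdot (x + t *: z) (A *m (x + t *: z)) = 2 * t * b + t * t * a.
  have xAz : vdot x (A *m z) = b by rewrite vdot_mulmx sA.
  rewrite mulmxDr -scalemxAr !(vdotDl, vdotDr, vdotZl, vdotZr) x0 -/a.
  by rewrite xAz -/z -/b; ring.
move=> ge0; have b0 : 0 <= b := vdot_ge0 z.
have t0 : t = 0 by nra.
by apply: vdot_eq0; rewrite -/b; apply/eqP; rewrite -oppr_eq0 -tb t0 mul0r.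
Qed.

Variables (M : 'M[R]_n).
Hypothesis M_sym : M^T = M.

Lemma eigenvalue_ge mu a : (forall y, mu * vdot y y <= vdot y (M *m y)) ->
  eigenvalue M a -> mu <= a.
Proof.
move=> muM /eigenvalueP [v vM v0].
have Mv : M *m v^T = a *: v^T by rewrite -{1}M_sym -trmx_mul vM linearZ.
have vpos : 0 < vdot v^T v^T by rewrite vdot_gt0 // trmx_eq0.
by have := muM v^T; rewrite Mv vdotZr ler_pM2r.
Qed.

(* The minimum of the quadratic form on the unit sphere is an eigenvalue. *)
Lemma rayleigh x : lambda_min M * vdot x x <= vdot x (M *m x).
Proof.
have [n0|n_gt0] := posnP n.
  have -> : x = 0 by apply/matrixP => -[i i_lt]; exfalso; move: i_lt; rewrite n0.
  by rewrite mulmx0 !vdot0l mulr0.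
have [x0 x01 x0min] := exists_rayleigh_minimizer M n_gt0.
set mu := vdot x0 (M *m x0) in x0min.
pose A := M - mu%:M.
have Aq y : vdot y (A *m y) = vdot y (M *m y) - mu * vdot y y.
  by rewrite mulmxBl mul_scalar_mx vdotBr vdotZr.
have Ax0 : A *m x0 = 0.
  apply: psd_quadratic_eq0.
  - by rewrite /A linearB /= tr_scalar_mx M_sym.
  - by move=> y; rewrite Aq subr_ge0.
  - by rewrite Aq x01 mulr1 subrr.
have Mx0 : M *m x0 = mu *: x0.
  by apply/eqP; rewrite -subr_eq0 -mul_scalar_mx -mulmxBl Ax0.
have mu_eig : eigenvalue M mu.
  apply/eigenvalueP; exists x0^T; first by rewrite -{1}M_sym -trmx_mul Mx0 linearZ.
  rewrite trmx_eq0; apply/eqP => x0_0.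
  by move: x01; rewrite x0_0 vdot0l => /esym/eqP; rewrite oner_eq0.
have lam_le : lambda_min M <= mu.
  by apply: ge_inf => //; exists mu => a /(eigenvalue_ge x0min).
exact: le_trans (ler_wpM2r (vdot_ge0 x) lam_le) (x0min x).
Qed.

End Rayleigh.

Section Taylor.
Variable R : realType.

(* Mean value theorem applied to [f s - K s^2 / 2]. *)
Lemma increment_le_of_derive_le_linear (f df : R -> R) (K : R) :
  (forall s : R, 0 <= s <= 1 -> is_derive s 1 f (df s)) ->
  (forall s : R, 0 < s < 1 -> df s <= K * s) ->
  f 1 - f 0 <= K / 2.
Proof.
move=> f_der df_le.
pose g := f - (K / 2) \*: ((id : R -> R^o) * id).
have g_der (s : R) : 0 <= s <= 1 -> is_derive s 1 g (df s - K * s).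
  move=> s01.
  have sq_der : is_derive s (1 : R) ((K / 2) \*: ((id : R -> R^o) * id))
                  ((K / 2) *: (s *: 1 + s *: 1)).
    by apply: is_deriveZ; apply: is_deriveM.
  apply: is_derive_eq (is_deriveB (f_der s s01) sq_der) _.
  by rewrite /GRing.scale /=; field.
have g_cont : {within `[0, 1], continuous g}.
  apply: continuous_in_subspaceT => s; rewrite inE /= in_itv /= => s01.
  by apply/differentiable_continuous/derivable1_diffP; case: (g_der s s01).
have [xi] := MVT ltr01 (fun s s01 => g_der s (subset_itv_oo_cc s01)) g_cont.
rewrite in_itv /= subr0 mulr1 => /andP[xi0 xi1] g_incr.
have : g 1 - g 0 <= 0 by rewrite g_incr subr_le0 df_le ?xi0.
by rewrite /g /= !fctE /= /GRing.scale /=; lra.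
Qed.

Variables (p q : nat) (m : 'cV[R]_p -> 'cV[R]_q) (G : 'cV[R]_p -> 'M[R]_(q, p)).
Variables (c : 'cV[R]_p) (r LG : R).
Hypothesis m_diff : forall th, ball2 c r th ->
  differentiable m th /\ (forall h, 'd m th h = G th *m h).
Hypothesis G_lip : forall th th', ball2 c r th -> ball2 c r th' ->
  opnorm (G th - G th') <= LG * norm2 (th - th').

Lemma ball2_segment (D : 'cV[R]_p) (s : R) :
  norm2 D <= r -> 0 <= s <= 1 -> ball2 c r (c + s *: D).
Proof.
move=> Dr /andP[s0 s1]; rewrite /ball2 /= addrC addKr norm2Z ger0_norm //.
by apply: le_trans Dr; rewrite ler_piMl ?norm2_ge0.
Qed.

Lemma is_derive_vdot_segment (D : 'cV[R]_p) (u : 'cV[R]_q) (t : R) :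
  differentiable m (c + t *: D) ->
  is_derive t 1 (fun s : R => vdot u (m (c + s *: D)) : R^o)
            (vdot u ('d m (c + t *: D) D)).
Proof.
move=> m_dt.
have vdot_lin : linear (fun y : 'cV[R]_q => vdot u y : R^o).
  by move=> a y z; rewrite vdotDr vdotZr.
have vdot_cont : continuous (fun y : 'cV[R]_q => vdot u y : R^o).
  apply: (@continuous_big _ _ +%R 0 xpredT add_continuous) => i _ y.
  by apply: continuousM; [exact: cst_continuous | exact: coord_continuous].
pose l : {linear 'cV[R]_q -> R^o} :=
  HB.pack (fun y : 'cV[R]_q => vdot u y : R^o) (GRing.isLinear.Build _ _ _ _ _ vdot_lin).
have l_diff y : is_diff y l l.
  by apply: DiffDef; [exact: linear_differentiable | exact: diff_lin].
pose seg := (cst c + ( *:%R ^~ D)) : R -> 'cV[R]_p.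
have seg_diff : is_diff t seg (0 + ( *:%R ^~ D)) by apply: is_diffD.
have m_diff_t : is_diff (seg t) m ('d m (c + t *: D)) by apply: differentiableP.
have comp_diff := is_diff_comp (is_diff_comp seg_diff m_diff_t) (l_diff _).
change (fun s : R => vdot u (m (c + s *: D)) : R^o) with (l \o (m \o seg)).
apply: DeriveDef; first exact: diff_derivable.
by rewrite deriveE // diff_val /= add0r scale1r.
Qed.

Lemma vdot_taylor_remainder_le (D : 'cV[R]_p) (u : 'cV[R]_q) : norm2 D <= r ->
  vdot u (m (c + D) - m c - G c *m D) <= norm2 u * LG * norm2 D ^+ 2 / 2.
Proof.
move=> Dr; set A := vdot u (G c *m D).
pose f (s : R) := vdot u (m (c + s *: D)) - A * s.
have f_der (s : R) : 0 <= s <= 1 -> is_derive s 1 f (vdot u (G (c + s *: D) *m D) - A).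
  move=> s01; have [m_ds dm] := m_diff (ball2_segment Dr s01).
  apply: is_derive_eq (is_deriveB (is_derive_vdot_segment u m_ds) (is_deriveZ A _)) _.
  by rewrite dm /GRing.scale /= mulr1.
have df_le (s : R) : 0 < s < 1 ->
    vdot u (G (c + s *: D) *m D) - A <= norm2 u * LG * norm2 D ^+ 2 * s.
  move=> /andP[s0 s1]; have s01 : 0 <= s <= 1 by rewrite !ltW.
  have c_ball : ball2 c r c by rewrite /ball2 /= subrr norm2_0 (le_trans (norm2_ge0 D)).
  have sD_ball := ball2_segment Dr s01.
  have G_le := G_lip sD_ball c_ball.
  rewrite [c + _ - c]addrC addKr norm2Z ger0_norm ?(ltW s0) // in G_le.
  rewrite /A -vdotBr -mulmxBl (le_trans (vdot_le _ _)) // -!mulrA ler_wpM2l ?norm2_ge0 //.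
  apply: le_trans (norm2_mulmx_le _ _) _.
  have -> : LG * (norm2 D * (norm2 D * s)) = LG * (s * norm2 D) * norm2 D by ring.
  by rewrite ler_wpM2r ?norm2_ge0.
have := increment_le_of_derive_le_linear f_der df_le.
rewrite /f !scale0r !scale1r addr0 mulr1 mulr0 subr0 !vdotBr -/A.
by move=> ?; lra.
Qed.

Lemma norm2_taylor_remainder_le (D : 'cV[R]_p) : 0 <= LG -> norm2 D <= r ->
  norm2 (m (c + D) - m c - G c *m D) <= LG * norm2 D ^+ 2 / 2.
Proof.
move=> LG0 Dr; set e := _ - _ - _.
have [e_eq0|e0] := eqVneq e 0; first by rewrite e_eq0 norm2_0 !mulr_ge0 ?norm2_ge0 ?invr_ge0.
have := vdot_taylor_remainder_le e Dr; rewrite -/e -norm2_sqr expr2 -!mulrA.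
by rewrite ler_pM2l ?norm2_gt0.
Qed.

End Taylor.

Section ScoreMonotonicity.
Variables (R : realType) (p q : nat).
Variables (m : 'cV[R]_p -> 'cV[R]_q) (G : 'cV[R]_p -> 'M[R]_(q, p)) (W : 'M[R]_q).
Variables (th0 : 'cV[R]_p) (r LG : R).
Hypothesis W_sym : W^T = W.
Hypothesis m_th0 : m th0 = 0.
Hypothesis m_diff : forall th, ball2 th0 r th ->
  differentiable m th /\ (forall h, 'd m th h = G th *m h).
Hypothesis G_lip : forall th th', ball2 th0 r th -> ball2 th0 r th' ->
  opnorm (G th - G th') <= LG * norm2 (th - th').

Let lam := lambda_min ((G th0)^T *m W *m G th0).
Let oW := opnorm W.
Let oG := opnorm (G th0).

Hypothesis curvature : oW * LG * r * (3 / 2 * oG + 1 / 2 * LG * r) <= lam / 2.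

(* With [D = th - th0], [m th = G th0 D + e] and [G th D = G th0 D + f], the
   score pairing is [D' G0' W G0 D + f' W G0 D + (G th D)' W e]; the first term
   is at least [lam |D|^2], and the two remainders are of order [|D|^3]. *)
Lemma gmm_score_strongly_monotone th : ball2 th0 r th ->
  lam / 2 * norm2 (th - th0) ^+ 2 <= vdot (th - th0) ((G th)^T *m W *m m th).
Proof.
move=> th_ball; set D := th - th0; set d := norm2 D.
have d0 : 0 <= d := norm2_ge0 D.
have [D_eq0|D0] := eqVneq D 0; first by rewrite /d D_eq0 norm2_0 vdot0l expr0n mulr0.
have dpos : 0 < d := norm2_gt0 D0.
have dr : d <= r := th_ball.
have th0_ball : ball2 th0 r th0 by rewrite /ball2 /= subrr norm2_0 (le_trans d0).
have G_le := G_lip th_ball th0_ball; rewrite -/D -/d in G_le.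
have LG0 : 0 <= LG by rewrite -(pmulr_lge0 _ dpos) (le_trans (opnorm_ge0 _) G_le).
have oW0 : 0 <= oW := opnorm_ge0 W.
have oG0 : 0 <= oG := opnorm_ge0 (G th0).
set e := m th - G th0 *m D; set f := (G th - G th0) *m D.
have e_le : norm2 e <= LG * d ^+ 2 / 2.
  have := norm2_taylor_remainder_le m_diff G_lip LG0 dr.
  by rewrite [th0 + D]addrC subrK m_th0 subr0.
have f_le : norm2 f <= LG * d * d by rewrite (le_trans (norm2_mulmx_le _ _)) ?ler_wpM2r.
have GD : G th *m D = G th0 *m D + f by rewrite /f mulmxBl addrC subrK.
have score_split : vdot D ((G th)^T *m W *m m th)
    = vdot D ((G th0)^T *m W *m G th0 *m D) + vdot f (W *m (G th0 *m D))
      + vdot (G th *m D) (W *m e).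
  have -> : m th = G th0 *m D + e by rewrite addrC subrK.
  rewrite -mulmxA vdot_trmx_mulmx mulmxDr vdotDr GD vdotDl.
  by rewrite -!mulmxA vdot_trmx_mulmx; ring.
have quad_ge : lam * d ^+ 2 <= vdot D ((G th0)^T *m W *m G th0 *m D).
  by rewrite norm2_sqr rayleigh // !trmx_mul trmxK W_sym mulmxA.
have cross1_ge : - (LG * d * d * (oW * (oG * d))) <= vdot f (W *m (G th0 *m D)).
  apply: le_trans (vdot_ge _ _); rewrite lerN2 ler_pM ?norm2_ge0 //.
  by rewrite (le_trans (norm2_mulmx_le _ _)) // ler_wpM2l // norm2_mulmx_le.
have cross2_ge : - ((oG * d + LG * d * d) * (oW * (LG * d ^+ 2 / 2)))
    <= vdot (G th *m D) (W *m e).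
  apply: le_trans (vdot_ge _ _); rewrite lerN2 ler_pM ?norm2_ge0 //.
  - by rewrite GD (le_trans (norm2D _ _)) // lerD // norm2_mulmx_le.
  - by rewrite (le_trans (norm2_mulmx_le _ _)) // ler_wpM2l.
have remainders_le : LG * d * d * (oW * (oG * d))
      + (oG * d + LG * d * d) * (oW * (LG * d ^+ 2 / 2))
    <= oW * LG * r * (3 / 2 * oG + 1 / 2 * LG * r) * d ^+ 2.
  have -> : LG * d * d * (oW * (oG * d)) + (oG * d + LG * d * d) * (oW * (LG * d ^+ 2 / 2))
      = oW * LG * d ^+ 2 * (3 / 2 * oG * d + 1 / 2 * LG * d * d) by field.
  have -> : oW * LG * r * (3 / 2 * oG + 1 / 2 * LG * r) * d ^+ 2
      = oW * LG * d ^+ 2 * (3 / 2 * oG * r + 1 / 2 * LG * r * r) by field.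
  rewrite ler_wpM2l ?mulr_ge0 ?sqr_ge0 // lerD // ?ler_wpM2l ?mulr_ge0 //.
  have dd : d * d <= r * r by rewrite ler_pM.
  nra.
have := ler_wpM2r (sqr_ge0 d) curvature.
rewrite score_split; lra.
Qed.

End ScoreMonotonicity.

Section ErrorBound.
Variables (R : realType) (p : nat).

Lemma norm2_weighted_sum_le L (a err : 'I_L -> R) (mu v : 'I_L -> 'cV[R]_p) (delta : R) :
  (forall k, 0 <= a k) -> (forall k, norm2 (v k - mu k) <= err k) ->
  norm2 (\sum_(k < L) a k *: v k) <= delta ->
  norm2 (\sum_(k < L) a k *: mu k) <= \sum_(k < L) a k * err k + delta.
Proof.
move=> a0 v_err v_le.
have -> : \sum_(k < L) a k *: mu k
    = \sum_(k < L) a k *: v k - \sum_(k < L) a k *: (v k - mu k).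
  by rewrite -sumrB; apply: eq_bigr => k _; rewrite scalerBr opprB addrC subrK.
rewrite (le_trans (norm2B _ _)) // addrC lerD // (le_trans (norm2_sum _ _ _)) //.
by apply: ler_sum => k _; rewrite norm2Z ger0_norm // ler_wpM2l.
Qed.

Lemma norm2_le_of_strongly_monotone (lam S : R) (D Psi : 'cV[R]_p) : 0 < lam ->
  lam / 2 * norm2 D ^+ 2 <= vdot D Psi -> norm2 Psi <= S ->
  norm2 D <= 2 / lam * S.
Proof.
move=> lam0 mono Psi_le.
have S0 : 0 <= S := le_trans (norm2_ge0 _) Psi_le.
have [D_eq0|D0] := eqVneq D 0; first by rewrite D_eq0 norm2_0 mulr_ge0 // divr_ge0 ?ler0n ?ltW.
have dpos := norm2_gt0 D0.
have : lam / 2 * norm2 D * norm2 D <= S * norm2 D.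
  rewrite -mulrA -expr2 [S * _]mulrC (le_trans mono) //.
  by rewrite (le_trans (vdot_le _ _)) // ler_wpM2l ?norm2_ge0.
rewrite ler_pM2r // => d_le.
have -> : 2 / lam * S = S / (lam / 2) by field; rewrite gt_eqF.
by rewrite ler_pdivlMr ?divr_gt0 // mulrC.
Qed.

End ErrorBound.

Unset Implicit Arguments.

Theorem mainTheorem15
  (R : realType) (p q L N : nat)
  (Theta : set 'cV[R]_p) (theta_star : 'cV[R]_p) (r0 LG : R)
  (m : 'cV[R]_p -> 'cV[R]_q) (G : 'cV[R]_p -> 'M[R]_(q, p)) (W : 'M[R]_q)
  (eps zeta : R)
  (mu_g : 'I_L -> 'cV[R]_p -> 'cV[R]_p) (a : 'I_L -> R)
  (delta_mu : 'I_L -> R -> R) (C : 'I_L -> R) (delta_opt : R)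
  (d : measure_display) (Omega : measurableType d) (P : probability Omega R)
  (E : set Omega)
  (gcheck : Omega -> 'I_L -> 'I_N -> 'cV[R]_p -> 'cV[R]_p)
  (what : Omega -> 'I_L -> 'cV[R]_p -> 'I_N -> R)
  (theta_hat : Omega -> 'cV[R]_p) :
  (0 < L)%N ->
  theta_star \in Theta ->
  sym_psd W ->
  (forall k, 0 <= a k) ->
  (forall k, 0 <= C k) ->
  0 <= delta_opt ->
  0 <= eps -> eps < 1 / 3 ->
  0 < zeta -> zeta < 1 ->
  0 < r0 ->
  ball2 theta_star r0 `<=` Theta ->
  m theta_star = 0 ->
  (forall th, ball2 theta_star r0 th ->
     differentiable m th /\ (forall h, 'd m th h = G th *m h)) ->
  (forall th th', ball2 theta_star r0 th -> ball2 theta_star r0 th' ->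
     opnorm (G th - G th') <= LG * norm2 (th - th')) ->
  0 < lambda_min ((G theta_star)^T *m W *m G theta_star) ->
  opnorm W * LG * r0 * (3 / 2 * opnorm (G theta_star) + 1 / 2 * LG * r0)
    <= lambda_min ((G theta_star)^T *m W *m G theta_star) / 2 ->
  (forall th, ball2 theta_star r0 th ->
     (G th)^T *m W *m m th = \sum_(k < L) a k *: mu_g k th) ->
  (forall w k th, capped_simplex eps (what w k th)) ->
  (forall w, theta_hat w \in Theta) ->
  measurable E ->
  ((1 - zeta)%:E <= P E)%E ->
  (forall w, E w ->
     (forall k th, ball2 theta_star r0 th ->
        norm2 (\sum_(n < N) what w k th n *: gcheck w k n th - mu_g k th)
          <= delta_mu k zeta + Num.sqrt (eps / (1 - 2 * eps)) * Num.sqrt (C k))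
     /\ ball2 theta_star r0 (theta_hat w)
     /\ norm2 (\sum_(k < L) a k *:
                 \sum_(n < N) what w k (theta_hat w) n *: gcheck w k n (theta_hat w))
          <= delta_opt) ->
  let bound := 2 / lambda_min ((G theta_star)^T *m W *m G theta_star) *
      (\sum_(k < L) a k * (delta_mu k zeta
                            + Num.sqrt (eps / (1 - 2 * eps)) * Num.sqrt (C k))
       + delta_opt) in
  (forall w, E w -> norm2 (theta_hat w - theta_star) <= bound) /\
  (exists F : set Omega, measurable F /\ ((1 - zeta)%:E <= P F)%E /\
     (forall w, F w -> norm2 (theta_hat w - theta_star) <= bound)).
Proof.
move=> _ _ [W_sym _] a0 _ _ _ _ _ _ _ _ m0 m_diff G_lip lam_gt0 curvature
  score_dec _ _ E_meas PE HE bound.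
have error_le w : E w -> norm2 (theta_hat w - theta_star) <= bound.
  move=> /HE[reweight_err [th_ball opt_le]].
  have score_ge := gmm_score_strongly_monotone W_sym m0 m_diff G_lip curvature th_ball.
  rewrite score_dec // in score_ge.
  apply: norm2_le_of_strongly_monotone lam_gt0 score_ge _.
  exact: norm2_weighted_sum_le a0 (fun k => reweight_err k _ th_ball) opt_le.
by split=> //; exists E.
Qed.
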